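(* Let $G=(V,E)$ be a simple directed graph and $f\ge 0$ an integer. Then: (a) $G$ satisfies Condition CCS if and only if $G$ satisfies the 1-reach condition; (b) $G$ satisfies Condition CCA if and only if $G$ satisfies the 2-reach condition; (c) $G$ satisfies Condition BCS if and only if $G$ satisfies the 3-reach condition.
   Context: For $Y\subseteq V$, $G_Y$ is the subgraph induced by $Y$ and $\overline{X}=V\setminus X$. For node $v$ and $F\subseteq V\setminus\{v\}$, $reach_v(F)=\{u\in\overline{F}: u\text{ has a directed path to }v\text{ in }G_{\overline{F}}\}$. For disjoint non-empty $A,B\subseteq V$, a node $w\notin B$ is an incoming neighbor of $B$ if $(w,b)\in E$ for some $b\in B$; write $A\Rightarrow_x B$ if $A$ contains at least $x$ distinct incoming neighbors of $B$, and $A\not\Rightarrow_x B$ for its negation. Condition CCS: for any partition $F,L,C,R$ of $V$ with $L,R$ non-empty and $|F|\le f$, $L\cup C\Rightarrow_1 R$ or $R\cup C\Rightarrow_1 L$. Condition CCA: for any partition $L,C,R$ of $V$ with $L,R$ non-empty, $L\cup C\Rightarrow_{f+1} R$ or $R\cup C\Rightarrow_{f+1} L$. Condition BCS: for any partition $F,L,C,R$ of $V$ with $L,R$ non-empty and $|F|\le f$, $L\cup C\Rightarrow_{f+1} R$ or $R\cup C\Rightarrow_{f+1} L$. 1-reach: for any $F\subset V$ with $|F|\le f$ and any $u,v\in\overline{F}$, $reach_u(F)\cap reach_v(F)\neq\emptyset$. 2-reach: for any $u,v\in V$ and any $F_u,F_v\subseteq V$ with $|F_u|,|F_v|\le f$,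 $u\notin F_u$, $v\notin F_v$, $reach_v(F_v)\cap reach_u(F_u)\neq\emptyset$. 3-reach: for any $u,v\in V$ and any $F,F_u,F_v\subseteq V$ with $|F|,|F_u|,|F_v|\le f$, $u\notin F\cup F_u$, $v\notin F\cup F_v$, $reach_v(F\cup F_v)\cap reach_u(F\cup F_u)\neq\emptyset$. *)

From mathcomp Require Import all_boot.
Set Implicit Arguments. Unset Strict Implicit. Unset Printing Implicit Defensive.

(* A directed graph G = (V,E): V is a finite type T, E is the relation e
   ((w,b) \in E  <->  e w b).  "Simple" = no self-loops (irreflexive e). *)

Section Defs.
Variables (T : finType) (e : rel T).

Definition induced_rel (F : {set T}) : rel T :=
  fun x y => [&& e x y, x \notin F & y \notin F].

Definition reach (v : T) (F : {set T}) : {set T} :=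
  [set u | (u \notin F) && connect (induced_rel F) u v].

Definition in_nbrs (B : {set T}) : {set T} :=
  [set w | (w \notin B) && [exists b in B, e w b]].

Definition arrow (A B : {set T}) (x : nat) : bool := x <= #|A :&: in_nbrs B|.

Definition partition3 (L C R : {set T}) : Prop :=
  [/\ L :|: C :|: R = setT, [disjoint L & C], [disjoint L & R] & [disjoint C & R]].

Definition partition4 (F L C R : {set T}) : Prop :=
  [/\ F :|: L :|: C :|: R = setT,
      [/\ [disjoint F & L], [disjoint F & C] & [disjoint F & R]] &
      [/\ [disjoint L & C], [disjoint L & R] & [disjoint C & R]]].

Definition condCCS (f : nat) : Prop :=
  forall F L C R : {set T}, partition4 F L C R -> L != set0 -> R != set0 ->
    #|F| <= f -> arrow (L :|: C) R 1 \/ arrow (R :|: C) L 1.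

Definition condCCA (f : nat) : Prop :=
  forall L C R : {set T}, partition3 L C R -> L != set0 -> R != set0 ->
    arrow (L :|: C) R f.+1 \/ arrow (R :|: C) L f.+1.

Definition condBCS (f : nat) : Prop :=
  forall F L C R : {set T}, partition4 F L C R -> L != set0 -> R != set0 ->
    #|F| <= f -> arrow (L :|: C) R f.+1 \/ arrow (R :|: C) L f.+1.

Definition reach1 (f : nat) : Prop :=
  forall (F : {set T}) (u v : T), F \proper setT -> #|F| <= f ->
    u \notin F -> v \notin F -> reach u F :&: reach v F != set0.

Definition reach2 (f : nat) : Prop :=
  forall (u v : T) (Fu Fv : {set T}), #|Fu| <= f -> #|Fv| <= f ->
    u \notin Fu -> v \notin Fv -> reach v Fv :&: reach u Fu != set0.

Definition reach3 (f : nat) : Prop :=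
  forall (u v : T) (F Fu Fv : {set T}), #|F| <= f -> #|Fu| <= f -> #|Fv| <= f ->
    u \notin F :|: Fu -> v \notin F :|: Fv ->
    reach v (F :|: Fv) :&: reach u (F :|: Fu) != set0.

End Defs.

From Stdlib Require Import Setoid.
From mathcomp Require Import all_boot.

(* The three equivalences are the instances (f, 1), (0, f + 1) and (f, f + 1)
   of one equivalence between a cut condition with parameters (k, x), where
   the cut set F has at most k nodes and each side must receive x incoming
   neighbours, and a reach condition where reach_u(F :|: Fu) and
   reach_v(F :|: Fv) must meet whenever |F| <= k and |Fu|, |Fv| < x.
   Its proof rests on two facts: every incoming neighbour of reach_u(F) lies
   in F, and reach_u(F) is contained in any set L containing u whose incoming
   neighbours all lie in F.  So two disjoint reach sets, taken as L and R,
   give a cut violating the condition; conversely, for a violating cut the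
   sets Fu = (R :|: C) :&: in_nbrs L and Fv = (L :|: C) :&: in_nbrs R have
   fewer than x elements and yield disjoint reach sets inside L and R. *)

Set Implicit Arguments. Unset Strict Implicit. Unset Printing Implicit Defensive.

Section Reach.
Variables (T : finType) (e : rel T).

Lemma mem_reach v (F : {set T}) : v \notin F -> v \in reach e v F.
Proof. by rewrite inE connect0 andbT. Qed.

Lemma disjoint_reach v (F : {set T}) : [disjoint F & reach e v F].
Proof.
by rewrite -setI_eq0; apply/eqP/setP => x; rewrite !inE; case: (x \in F).
Qed.

Lemma in_nbrs_reach v (F : {set T}) : in_nbrs e (reach e v F) \subset F.
Proof.
apply/subsetP => w; rewrite inE => /andP[wNR /existsP[r /andP[rR ewr]]].
apply: contraR wNR => wF; rewrite inE wF /=.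
move: rR; rewrite inE => /andP[rF rv]; apply: connect_trans rv; apply: connect1.
by rewrite /induced_rel ewr wF.
Qed.

Lemma reach_sub (L F : {set T}) u :
  in_nbrs e L \subset F -> u \in L -> reach e u F \subset L.
Proof.
move=> nbrsL uL; apply/subsetP => x; rewrite inE => /andP[xF /connectP[p]].
elim: p x xF => [|y p IHp] x xF /=; first by move=> _ <-.
case/andP=> /and3P[exy _ yF] yp lastp.
have yL := IHp y yF yp lastp.
apply: contraNT xF => xL; apply: (subsetP nbrsL).
by rewrite inE xL; apply/existsP; exists y; rewrite yL.
Qed.

End Reach.

Section Partition.
Variables (T : finType) (e : rel T).
Implicit Types F L C R X : {set T}.

Lemma partition4_sym F L C R : partition4 F L C R -> partition4 F R C L.
Proof.
case=> cover [FL FC FR] [LC LR CR].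
split; [|done|by split; rewrite disjoint_sym].
apply/setP => x; move/setP/(_ x): cover; rewrite !inE.
by case: (x \in F) (x \in L) (x \in C) (x \in R) => [] [] [] [].
Qed.

Lemma partition4_compl F L R :
  [disjoint F & L] -> [disjoint F & R] -> [disjoint L & R] ->
  partition4 F L (~: (F :|: L :|: R)) R.
Proof.
move=> FL FR LR; split; [|split|split] => //.
  apply/setP => x; rewrite !inE.
  by case: (x \in F) (x \in L) (x \in R) => [] [] [].
all: rewrite -setI_eq0; apply/eqP/setP => x; rewrite !inE.
all: by case: (x \in F) (x \in L) (x \in R) => [] [] [].
Qed.

Lemma partition4_set0 L C R : partition4 set0 L C R <-> partition3 L C R.
Proof.
have set0D (A : {set T}) : [disjoint set0 & A] by rewrite -setI_eq0 set0I.
rewrite /partition4 /partition3 !set0U.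
split=> [[cover _ [LC LR CR]] | [cover LC LR CR]]; first by split.
by split=> //; split; apply: set0D.
Qed.

Lemma in_nbrs_partition F L C R : partition4 F L C R ->
  in_nbrs e L \subset F :|: (R :|: C) :&: in_nbrs e L.
Proof.
case=> /setP cover _ _; apply/subsetP => w wN.
move: (cover w) wN; rewrite !inE => /esym.
by case: (w \in F) (w \in L) (w \in C) (w \in R) => [] [] [] [].
Qed.

Lemma arrow_leq_card F L C R X x : partition4 F L C R ->
  in_nbrs e R \subset F :|: X -> arrow e (L :|: C) R x -> x <= #|X|.
Proof.
case=> _ [FL FC _] _ nbrsR /leq_trans; apply; apply: subset_leq_card.
apply/subsetP => w; rewrite inE => /andP[wLC /(subsetP nbrsR)].
case/setUP => // wF; case/setUP: wLC => [wL | wC].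
- by rewrite (disjointFr FL wF) in wL.
- by rewrite (disjointFr FC wF) in wC.
Qed.

End Partition.

Section CutReach.
Variables (T : finType) (e : rel T).

Definition cut_cond (k x : nat) : Prop :=
  forall F L C R : {set T}, partition4 F L C R -> L != set0 -> R != set0 ->
    #|F| <= k -> arrow e (L :|: C) R x \/ arrow e (R :|: C) L x.

Definition reach_cond (k x : nat) : Prop :=
  forall (u v : T) (F Fu Fv : {set T}), #|F| <= k -> #|Fu| < x -> #|Fv| < x ->
    u \notin F :|: Fu -> v \notin F :|: Fv ->
    reach e v (F :|: Fv) :&: reach e u (F :|: Fu) != set0.

Lemma reach_cond_of_cut_cond k x : cut_cond k x -> reach_cond k x.
Proof.
move=> cut u v F Fu Fv kF xFu xFv uF vF; apply/negP => /eqP reach0.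
set L := reach e u (F :|: Fu); set R := reach e v (F :|: Fv).
have FL : [disjoint F & L].
  exact: disjointWl (subsetUl _ _) (disjoint_reach _ _ _).
have FR : [disjoint F & R].
  exact: disjointWl (subsetUl _ _) (disjoint_reach _ _ _).
have LR : [disjoint L & R] by rewrite -setI_eq0 setIC reach0.
have P := partition4_compl FL FR LR.
have nL : L != set0 by apply/set0Pn; exists u; apply: mem_reach.
have nR : R != set0 by apply/set0Pn; exists v; apply: mem_reach.
case: (cut _ _ _ _ P nL nR kF) => [LC_R | RC_L].
- have := arrow_leq_card P (in_nbrs_reach _ _ _) LC_R.
  by rewrite leqNgt xFv.
- have := arrow_leq_card (partition4_sym P) (in_nbrs_reach _ _ _) RC_L.
  by rewrite leqNgt xFu.
Qed.

Lemma cut_cond_of_reach_cond k x : reach_cond k x -> cut_cond k x.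
Proof.
move=> reachk F L C R P /set0Pn[u uL] /set0Pn[v vR] kF.
have P' := partition4_sym P; have [_ [FL _ FR] [_ LR _]] := P.
rewrite /arrow.
have [|ltR] := leqP x #|(L :|: C) :&: in_nbrs e R|; first by left.
have [|ltL] := leqP x #|(R :|: C) :&: in_nbrs e L|; first by right.
have uF : u \notin F :|: (R :|: C) :&: in_nbrs e L.
  by rewrite !inE uL (disjointFl FL uL) /= andbF.
have vF : v \notin F :|: (L :|: C) :&: in_nbrs e R.
  by rewrite !inE vR (disjointFl FR vR) /= andbF.
have /negP[] := reachk u v F _ _ kF ltL ltR uF vF.
rewrite setI_eq0 disjoint_sym.
apply: disjointW LR; apply: reach_sub => //; exact: in_nbrs_partition.
Qed.

Lemma cut_cond_iff_reach_cond k x : cut_cond k x <-> reach_cond k x.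
Proof.
by split; [apply: reach_cond_of_cut_cond | apply: cut_cond_of_reach_cond].
Qed.

Lemma condCCA_iff_cut_cond f : condCCA e f <-> cut_cond 0 f.+1.
Proof.
split=> [cca F L C R P nL nR | cut L C R P nL nR].
- rewrite leqn0 cards_eq0 => /eqP F0; subst F.
  by apply: cca => //; apply/partition4_set0.
- by apply: cut => //; [apply/partition4_set0 | rewrite cards0].
Qed.

Lemma reach1_iff_reach_cond f : reach1 e f <-> reach_cond f 1.
Proof.
split=> [r1 u v F Fu Fv kF | rc F u v _ kF uF vF].
- rewrite !ltnS !leqn0 !cards_eq0 => /eqP-> /eqP->; rewrite !setU0 => uF vF.
  rewrite setIC; apply: r1 => //.
  by rewrite properT; apply: contraNneq uF => ->; rewrite inE.
- by rewrite setIC; have := rc u v F set0 set0 kF; rewrite cards0 !setU0; apply.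
Qed.

Lemma reach2_iff_reach_cond f : reach2 e f <-> reach_cond 0 f.+1.
Proof.
split=> [r2 u v F Fu Fv | rc u v Fu Fv].
- by rewrite leqn0 cards_eq0 => /eqP->; rewrite !set0U; apply: r2.
- by have := rc u v set0 Fu Fv; rewrite cards0 !set0U; apply.
Qed.

End CutReach.

Theorem theoremA8 (T : finType) (e : rel T) (f : nat) :
  irreflexive e ->
  [/\ condCCS e f <-> reach1 e f,
      condCCA e f <-> reach2 e f &
      condBCS e f <-> reach3 e f].
Proof.
move=> _; split.
- by rewrite reach1_iff_reach_cond; apply: cut_cond_iff_reach_cond.
- rewrite condCCA_iff_cut_cond reach2_iff_reach_cond.
  exact: cut_cond_iff_reach_cond.
- exact: (cut_cond_iff_reach_cond e f f.+1).
Qed.
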